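(* In the sequential two-level memory model with a fast memory of size $M$, any classical Cholesky decomposition algorithm for $n{\times}n$ matrices has bandwidth cost $\Omega(n^3/M^{1/2})$ and latency cost $\Omega(n^3/M^{3/2})$.
   Context: The Cholesky decomposition of a real symmetric positive definite matrix $A$ is $A = LL^T$ with $L$ lower triangular; its entries satisfy $L(i,i)=\sqrt{A(i,i)-\sum_{k=1}^{i-1}L(i,k)^2}$ and $L(i,j)=\frac{1}{L(j,j)}\big(A(i,j)-\sum_{k=1}^{j-1}L(i,k)L(j,k)\big)$ for $i>j$. A ''classical'' Cholesky algorithm performs exactly these arithmetic operations, possibly reordered using only associativity and commutativity of addition (no pivoting, no distributivity). Sequential two-level memory model: a fast memory holding $M$ words and an unbounded slow memory; the matrix initially resides in slow memory and is too large to fit in fast memory ($M<n^2$). Words contiguous in slow memory can be read or written together as one message, of at most $M$ words. Bandwidth cost is the total number of words transferred between fast and slow memory; latency cost is the total number of messages. *)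

From Stdlib Require Import Reals List Arith.
Import ListNotations.

(** A word of memory holds a symbolic expression recording exactly which
   arithmetic operations produced it.  [Ent i j] is the input entry
   A(i,j) with j <= i (A is symmetric, so the lower triangle determines it;
   indices are 0-based). *)
Inductive expr : Type :=
| Ent : nat -> nat -> expr
| EAdd : expr -> expr -> expr
| ESub : expr -> expr -> expr
| EMul : expr -> expr -> expr
| EDiv : expr -> expr -> expr
| ESqrt : expr -> expr.

(** [Lterm n i j e]: e computes L(i,j) (j <= i < n) by the Cholesky formulas
     L(i,i) = sqrt (A(i,i) - sum_{k<i} L(i,k)^2)
     L(i,j) = (A(i,j) - sum_{k<j} L(i,k) L(j,k)) / L(j,j)
   where the expression A(i,j) - sum_k ... may be evaluated in any order
   obtained by associativity/commutativity of addition.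

   [Psum n i j a S s e]: e is a partial sum for the entry (i,j): if [s]
   is true, e = [a]A(i,j) - sum_{k in S} L(i,k) L(j,k); if [s] is false,
   e is the negation of that quantity. *)
Inductive Lterm (n : nat) : nat -> nat -> expr -> Prop :=
| L_diag : forall i S e,
    i < n -> Psum n i i true S true e ->
    (forall k, S k = Nat.ltb k i) ->
    Lterm n i i (ESqrt e)
| L_off : forall i j S e d,
    j < i -> i < n -> Psum n i j true S true e ->
    (forall k, S k = Nat.ltb k j) ->
    Lterm n j j d ->
    Lterm n i j (EDiv e d)
with Psum (n : nat) : nat -> nat -> bool -> (nat -> bool) -> bool -> expr -> Prop :=
| P_ent : forall i j, j <= i -> i < n ->
    Psum n i j true (fun _ => false) true (Ent i j)
| P_prod : forall i j k x y, k < j -> j <= i ->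
    Lterm n i k x -> Lterm n j k y ->
    Psum n i j false (fun k' => Nat.eqb k' k) false (EMul x y)
| P_add : forall i j a1 a2 S1 S2 s x y,
    Psum n i j a1 S1 s x -> Psum n i j a2 S2 s y ->
    andb a1 a2 = false -> (forall k, andb (S1 k) (S2 k) = false) ->
    Psum n i j (orb a1 a2) (fun k => orb (S1 k) (S2 k)) s (EAdd x y)
| P_sub : forall i j a1 a2 S1 S2 s x y,
    Psum n i j a1 S1 s x -> Psum n i j a2 S2 (negb s) y ->
    andb a1 a2 = false -> (forall k, andb (S1 k) (S2 k) = false) ->
    Psum n i j (orb a1 a2) (fun k => orb (S1 k) (S2 k)) s (ESub x y).

(** An arithmetic operation is allowed iff its result is one of the
    quantities of the classical Cholesky computation. *)
Definition classical (n : nat) (e : expr) : Prop :=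
  (exists i j, Lterm n i j e) \/ (exists i j a S s, Psum n i j a S s e).

(** Fast memory: slots 0..M-1; slow memory: unbounded (addresses in nat).
   [None] = word holding no (meaningful) value. *)
Record state : Type := mkState {
  fast : nat -> option expr;
  slow : nat -> option expr }.

Inductive binop : Type := BAdd | BSub | BMul | BDiv.

Definition apply_binop (o : binop) (x y : expr) : expr :=
  match o with
  | BAdd => EAdd x y | BSub => ESub x y
  | BMul => EMul x y | BDiv => EDiv x y
  end.

Inductive instr : Type :=
(* one message: read slow words a, a+1, ..., a+len-1 into fast slots dst *)
| Read (a : nat) (dst : list nat)
(* one message: write fast slots src into slow words a, a+1, ... *)
| Write (src : list nat) (a : nat)
| Op2 (o : binop) (d s1 s2 : nat)
| OpSqrt (d s : nat).

Definition upd (f : nat -> option expr) (x : nat) (v : option expr)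
  : nat -> option expr := fun y => if Nat.eqb y x then v else f y.

Fixpoint load (f sl : nat -> option expr) (a : nat) (dst : list nat)
  : nat -> option expr :=
  match dst with
  | [] => f
  | d :: ds => upd (load f sl (S a) ds) d (sl a)
  end.

Fixpoint store (sl f : nat -> option expr) (src : list nat) (a : nat)
  : nat -> option expr :=
  match src with
  | [] => sl
  | d :: ds => upd (store sl f ds (S a)) a (f d)
  end.

Inductive step (n M : nat) : state -> instr -> state -> Prop :=
| st_read : forall f sl a dst,
    1 <= length dst <= M -> NoDup dst -> (forall d, In d dst -> d < M) ->
    step n M (mkState f sl) (Read a dst) (mkState (load f sl a dst) sl)
| st_write : forall f sl src a,
    1 <= length src <= M -> NoDup src -> (forall d, In d src -> d < M) ->
    step n M (mkState f sl) (Write src a) (mkState f (store sl f src a))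
| st_op2 : forall f sl o d s1 s2 x y,
    d < M -> s1 < M -> s2 < M -> f s1 = Some x -> f s2 = Some y ->
    classical n (apply_binop o x y) ->
    step n M (mkState f sl) (Op2 o d s1 s2)
         (mkState (upd f d (Some (apply_binop o x y))) sl)
| st_sqrt : forall f sl d s x,
    d < M -> s < M -> f s = Some x -> classical n (ESqrt x) ->
    step n M (mkState f sl) (OpSqrt d s) (mkState (upd f d (Some (ESqrt x))) sl).

Inductive exec (n M : nat) : state -> list instr -> state -> Prop :=
| ex_nil : forall st, exec n M st [] st
| ex_cons : forall st st' st'' i p,
    step n M st i st' -> exec n M st' p st'' -> exec n M st (i :: p) st''.

Definition words (i : instr) : nat :=
  match i with
  | Read _ dst => length dst
  | Write src _ => length src
  | _ => 0
  end.

Definition is_msg (i : instr) : nat :=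
  match i with
  | Read _ _ | Write _ _ => 1
  | _ => 0
  end.

Definition bandwidth (p : list instr) : nat := fold_right (fun i acc => words i + acc) 0 p.
Definition latency (p : list instr) : nat := fold_right (fun i acc => is_msg i + acc) 0 p.

(* initially the matrix resides in slow memory (arbitrary layout, possibly
   with repeated entries, e.g. both triangles), fast memory is empty *)
Definition matrix_layout (n : nat) (s0 : nat -> option expr) : Prop :=
  forall a e, s0 a = Some e -> exists i j, j <= i /\ i < n /\ e = Ent i j.

Definition init_state (s0 : nat -> option expr) : state :=
  mkState (fun _ => None) s0.

Definition computes_cholesky (n : nat) (st : state) : Prop :=
  forall i j, j <= i -> i < n ->
    exists a e, slow st a = Some e /\ Lterm n i j e.

(** Every value in memory is a symbolic expression and so belongs to an
    entry (i,j) of the matrix.  For k < j < i the product L(i,k) L(j,k) must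
    be computed in fast memory before L(i,j) can be stored.  Cut the
    execution into segments each moving at most M words.  A segment touches
    at most 4M entries (those held in fast memory at its two ends and those
    moved during it), and the last computation of L(i,k) L(j,k) touches
    (i,k), (j,k) and (i,j) within its segment: its operands were in fast
    memory at the start of the segment or were read during it, and the
    product can only leave the segment inside a value of entry (i,j).
    A set of N entries carries O(N^{3/2}) such triangles (a discrete
    Loomis-Whitney inequality), so the (n/3)^3 products need
    Omega(n^3/M^{3/2}) segments, that is Omega(n^3/M^{1/2}) words.  When
    fewer than M words are moved this forces n = O(sqrt M), and the n^2/4
    words needed to write the output suffice.  A message carries at most M
    words, whence the latency bound. *)

From Stdlib Require Import Reals List Arith Lia Lra Classical Relations.
Import ListNotations.

(** * Entries of classical values *)

Inductive child : expr -> expr -> Prop :=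
| child_addl x y : child x (EAdd x y) | child_addr x y : child y (EAdd x y)
| child_subl x y : child x (ESub x y) | child_subr x y : child y (ESub x y)
| child_mull x y : child x (EMul x y) | child_mulr x y : child y (EMul x y)
| child_divl x y : child x (EDiv x y) | child_divr x y : child y (EDiv x y)
| child_sqrt x : child x (ESqrt x).

Notation subterm := (clos_refl_trans_n1 expr child).

Lemma subterm_step e c x : child c x -> subterm e c -> subterm e x.
Proof. apply Relation_Operators.rtn1_trans. Qed.

Lemma subterm_trans a b c : subterm a b -> subterm b c -> subterm a c.
Proof. intros Hab Hbc; induction Hbc; eauto using subterm_step. Qed.

Lemma subterm_of_child c x : child c x -> subterm c x.
Proof. apply clos_rtn1_step. Qed.

Lemma subterm_inv e x : subterm e x -> e = x \/ exists c, child c x /\ subterm e c.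
Proof. intros H; inversion H; eauto. Qed.

Lemma subterm_Ent e i j : subterm e (Ent i j) -> e = Ent i j.
Proof. intros [H|[c [Hc _]]]%subterm_inv; [exact H | inversion Hc]. Qed.

(* L(i,k) L(j,k) belongs to the entry (i,j) it is subtracted from. *)
Fixpoint entry_of (e : expr) : nat * nat :=
  match e with
  | Ent i j => (i, j)
  | EAdd x _ | ESub x _ | EDiv x _ | ESqrt x => entry_of x
  | EMul x y => (fst (entry_of x), fst (entry_of y))
  end.

Definition Ent_at (p : nat * nat) : expr := Ent (fst p) (snd p).

Definition owns_entry (e : expr) : Prop := subterm (Ent_at (entry_of e)) e.

Scheme Lterm_mut := Induction for Lterm Sort Prop
with Psum_mut := Induction for Psum Sort Prop.
Combined Scheme Lterm_Psum_mut from Lterm_mut, Psum_mut.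

Section ClassicalTerms.
Variable n : nat.

Lemma entry_of_Lterm_Psum :
  (forall i j e, Lterm n i j e -> entry_of e = (i, j)) /\
  (forall i j a S s e, Psum n i j a S s e -> entry_of e = (i, j)).
Proof.
  apply (Lterm_Psum_mut n (fun i j e _ => entry_of e = (i, j))
                          (fun i j _ _ _ e _ => entry_of e = (i, j)));
    intros; simpl; repeat match goal with H : entry_of _ = _ |- _ => rewrite H end; auto.
Qed.

Lemma entry_of_Lterm i j e : Lterm n i j e -> entry_of e = (i, j).
Proof. apply entry_of_Lterm_Psum. Qed.

Lemma entry_of_Psum i j a S s e : Psum n i j a S s e -> entry_of e = (i, j).
Proof. apply entry_of_Lterm_Psum. Qed.

Lemma Lterm_not_Ent i j e a b : Lterm n i j e -> e <> Ent a b.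
Proof. intros H; inversion H; discriminate. Qed.

Lemma Psum_subterm_Ent i j a S s e : Psum n i j a S s e -> a = true -> subterm (Ent i j) e.
Proof.
  intros H; induction H as [| | ? ? a1 ? ? ? ? ? ? ? IH1 ? IH2 | ? ? a1 ? ? ? ? ? ? ? IH1 ? IH2];
    intros Ha; try discriminate.
  - constructor.
  - destruct a1; [apply (subterm_step _ x) | apply (subterm_step _ y)]; auto using child.
  - destruct a1; [apply (subterm_step _ x) | apply (subterm_step _ y)]; auto using child.
Qed.

Lemma Lterm_owns_entry i j e : Lterm n i j e -> owns_entry e.
Proof.
  unfold owns_entry; intros H; rewrite (entry_of_Lterm _ _ _ H).
  inversion H; subst; (eapply subterm_step; [constructor | eauto using Psum_subterm_Ent]).
Qed.

Definition leaves_le (i j : nat) (e : expr) : Prop :=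
  forall a b, subterm (Ent a b) e -> a <= i /\ b <= j.

Lemma leaves_le_mono i j i' j' e : i <= i' -> j <= j' -> leaves_le i j e -> leaves_le i' j' e.
Proof. intros Hi Hj H a b Hs; destruct (H a b Hs); lia. Qed.

Lemma leaves_le_node i j x : (forall c, child c x -> leaves_le i j c) ->
  (forall a b, x <> Ent a b) -> leaves_le i j x.
Proof.
  intros Hc Hx a b [E|[c [Hcx Hs]]]%subterm_inv; [now destruct (Hx a b)|].
  exact (Hc c Hcx a b Hs).
Qed.

Lemma Lterm_Psum_leaves_le :
  (forall i j e, Lterm n i j e -> leaves_le i j e) /\
  (forall i j a S s e, Psum n i j a S s e -> leaves_le i j e).
Proof.
  apply (Lterm_Psum_mut n (fun i j e _ => leaves_le i j e) (fun i j _ _ _ e _ => leaves_le i j e));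
    intros;
    try (apply leaves_le_node; [intros c Hc; inversion Hc; subst|discriminate]);
    try (eapply leaves_le_mono; [| |eassumption]; lia).
  intros a b Hs; apply subterm_Ent in Hs; injection Hs; lia.
Qed.

Lemma Lterm_leaves_le i j e : Lterm n i j e -> leaves_le i j e.
Proof. apply Lterm_Psum_leaves_le. Qed.

Ltac rewrite_entries :=
  repeat match goal with
  | H : Psum _ _ _ _ _ _ ?e |- context [entry_of ?e] => rewrite (entry_of_Psum _ _ _ _ _ _ H)
  | H : Lterm _ _ _ ?e |- context [entry_of ?e] => rewrite (entry_of_Lterm _ _ _ H)
  end.

Lemma Lterm_excludes_Ent i j c a b : Lterm n i j c -> i < a \/ j < b -> ~ subterm (Ent a b) c.
Proof. intros H Hab Hs; destruct (Lterm_leaves_le _ _ _ H a b Hs); lia. Qed.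

Lemma classical_child c x : classical n x -> child c x ->
  classical n c /\
  (entry_of c = entry_of x \/
   (exists i j, Lterm n i j c) /\ ~ subterm (Ent_at (entry_of x)) c).
Proof.
  intros [[i [j H]] | [i [j [a [S [s H]]]]]] Hc; inversion H; subst; inversion Hc; subst;
    (split; [solve [left; eauto | right; do 5 eexists; eassumption] |]);
    unfold Ent_at; simpl; rewrite_entries; simpl;
    first [ left; reflexivity
          | right; split; [eauto | eapply Lterm_excludes_Ent; [eassumption | lia]] ].
Qed.

Lemma Psum_product i j a S s e k : Psum n i j a S s e -> S k = true ->
  exists x y, subterm (EMul x y) e /\ Lterm n i k x /\ Lterm n j k y.
Proof.
  intros H; induction H as [| ? ? k' x y | ? ? ? ? S1 S2 ? x y ? IH1 ? IH2 ? ?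
                                      | ? ? ? ? S1 S2 ? x y ? IH1 ? IH2 ? ?];
    intros Hk; try discriminate.
  1: apply Nat.eqb_eq in Hk; subst; exists x, y; repeat split; auto; constructor.
  all: apply Bool.orb_true_iff in Hk as [Hk|Hk];
         [ destruct (IH1 Hk) as (x' & y' & Hs & HL); exists x', y'; split;
             [apply (subterm_step _ x); auto using child | exact HL]
         | destruct (IH2 Hk) as (x' & y' & Hs & HL); exists x', y'; split;
             [apply (subterm_step _ y); auto using child | exact HL] ].
Qed.

Lemma classical_above_product x y V : subterm (EMul x y) V -> classical n V ->
  entry_of V = entry_of (EMul x y) \/
  exists N, subterm (EMul x y) N /\ subterm N V /\
    Lterm n (fst (entry_of (EMul x y))) (snd (entry_of (EMul x y))) N.
Proof.
  intros HP; induction HP as [|c V Hc HP IH]; intros HV; [left; reflexivity|].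
  destruct (classical_child _ _ HV Hc) as [Hcl [E | [[i [j HL]] _]]];
    destruct (IH Hcl) as [E' | (N & H1 & H2 & H3)].
  - left; congruence.
  - right; exists N; eauto using subterm_trans, subterm_of_child.
  - right; exists c; split; [|split]; auto using subterm_of_child.
    rewrite <- E', (entry_of_Lterm _ _ _ HL); exact HL.
  - right; exists N; eauto using subterm_trans, subterm_of_child.
Qed.

Lemma Lterm_operand i j N : Lterm n i j N ->
  exists c, child c N /\ owns_entry c /\ entry_of c = (i, j).
Proof.
  unfold owns_entry; intros H; inversion H; subst; eexists;
    (split; [constructor|]); erewrite entry_of_Psum by eassumption;
    eauto using Psum_subterm_Ent.
Qed.

End ClassicalTerms.

Definition opt_list {A} (o : option A) : list A :=
  match o with Some v => [v] | None => [] end.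

Lemma in_flat_map_opt {A B} (g : A -> option B) l v :
  In v (flat_map (fun k => opt_list (g k)) l) <-> exists k, In k l /\ g k = Some v.
Proof.
  rewrite in_flat_map; split; intros [k [Hk Hv]]; exists k; split; auto.
  - destruct (g k); simpl in Hv; [destruct Hv as [->|[]] | destruct Hv]; reflexivity.
  - rewrite Hv; now left.
Qed.

Lemma length_flat_map_opt {A B} (g : A -> option B) l :
  length (flat_map (fun k => opt_list (g k)) l) <= length l.
Proof. induction l as [|a l IH]; simpl; auto. rewrite length_app; destruct (g a); simpl; lia. Qed.

Definition moved (st : state) (i : instr) : list expr :=
  match i with
  | Read a dst => flat_map (fun k => opt_list (slow st (a + k))) (seq 0 (length dst))
  | Write src a => flat_map (fun d => opt_list (fast st d)) src
  | _ => []
  end.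

Definition result_of (st : state) (i : instr) : option expr :=
  match i with
  | Op2 o d s1 s2 =>
      match fast st s1, fast st s2 with
      | Some x, Some y => Some (apply_binop o x y)
      | _, _ => None
      end
  | OpSqrt d s => option_map ESqrt (fast st s)
  | _ => None
  end.

Definition in_memory (st : state) (v : expr) : Prop :=
  (exists d, fast st d = Some v) \/ (exists a, slow st a = Some v).

Definition alive (e : expr) (st : state) : Prop := exists v, in_memory st v /\ subterm e v.

Lemma moved_length st i : length (moved st i) <= words i.
Proof.
  destruct i as [a dst|src a| |]; simpl; auto using length_flat_map_opt.
  rewrite <- (length_seq (length dst) 0) at 2; apply length_flat_map_opt.
Qed.

Lemma moved_in_memory st i v : In v (moved st i) -> in_memory st v.
Proof.
  destruct i; simpl; intros H; try destruct H;
    apply in_flat_map_opt in H as [k [_ Hk]]; [right|left]; eauto.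
Qed.

Lemma result_not_Ent st i r a b : result_of st i = Some r -> r <> Ent a b.
Proof.
  destruct i as [| |o d s1 s2|d s]; simpl; try discriminate.
  - destruct (fast st s1), (fast st s2); try discriminate.
    injection 1 as <-; destruct o; discriminate.
  - destruct (fast st s); try discriminate. injection 1 as <-; discriminate.
Qed.

Lemma load_spec dst f sl a d v : load f sl a dst d = Some v ->
  f d = Some v \/ In d dst /\ exists k, k < length dst /\ sl (a + k) = Some v.
Proof.
  revert a; induction dst as [|x ds IH]; intros a H; simpl in H; auto.
  unfold upd in H; destruct (Nat.eqb_spec d x).
  - right; split; [now left|]; exists 0; simpl; rewrite Nat.add_0_r; split; [lia | exact H].
  - apply IH in H as [H|[Hd [k [Hk Hv]]]]; auto.
    right; split; [now right|]; exists (S k); simpl; rewrite <- Nat.add_succ_comm.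
    split; [lia | exact Hv].
Qed.

Lemma store_spec src sl f a b v : store sl f src a b = Some v ->
  sl b = Some v \/ exists d, In d src /\ f d = Some v.
Proof.
  revert a; induction src as [|x ds IH]; intros a H; simpl in H; auto.
  unfold upd in H; destruct (Nat.eqb_spec b a).
  - right; exists x; split; [left|]; auto.
  - apply IH in H as [H|[d [H1 H2]]]; auto. right; exists d; split; [right|]; auto.
Qed.

Section Step.
Variables (n M : nat).

Lemma step_fast_origin st i st' d x : step n M st i st' -> fast st' d = Some x ->
  (exists d', fast st d' = Some x) \/ In x (moved st i) \/
  (result_of st i = Some x /\ forall c, child c x -> exists d', fast st d' = Some c).
Proof.
  intros Hs H;
    inversion Hs as [f sl a dst _ _ _ | f sl src a _ _ _ | f sl o d' s1 s2 x' y' _ _ _ Hx Hy _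
                    | f sl d' s x' _ _ Hx _]; subst; simpl in *.
  - apply load_spec in H as [H|[_ [k [Hk H]]]]; [left; eauto | right; left].
    apply in_flat_map_opt; exists k; split; auto. apply in_seq; lia.
  - left; eauto.
  - unfold upd in H; destruct (Nat.eqb_spec d d'); [|left; eauto].
    injection H as <-; right; right; rewrite Hx, Hy; split; auto.
    intros c Hc; destruct o; inversion Hc; subst; eauto.
  - unfold upd in H; destruct (Nat.eqb_spec d d'); [|left; eauto].
    injection H as <-; right; right; rewrite Hx; split; auto.
    intros c Hc; inversion Hc; subst; eauto.
Qed.

Lemma step_slow_origin st i st' a x : step n M st i st' -> slow st' a = Some x ->
  slow st a = Some x \/ In x (moved st i).
Proof.
  intros Hs H; inversion Hs; subst; simpl in *; auto.
  apply store_spec in H as [H|[d [Hd1 Hd2]]]; auto.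
  right; apply in_flat_map_opt; eauto.
Qed.

(* Moving words around never creates a new subterm. *)
Lemma step_newly_alive st i st' e : step n M st i st' -> alive e st' -> ~ alive e st ->
  result_of st i = Some e /\ forall c, child c e -> exists d, fast st d = Some c.
Proof.
  intros Hs [v [[[d Hd]|[a Ha]] Hsub]] Hna.
  - destruct (step_fast_origin _ _ _ _ _ Hs Hd) as [[d' H]|[H|[Hr Hc]]].
    + exfalso; apply Hna; exists v; split; [left; eauto | auto].
    + exfalso; apply Hna; exists v; split; [eapply moved_in_memory; eauto | auto].
    + apply subterm_inv in Hsub as [->|[c [Hc' Hsc]]]; [auto|].
      exfalso; apply Hna; destruct (Hc c Hc') as [d' Hd']; exists c; split; [left|]; eauto.
  - exfalso; apply Hna; exists v; split; auto.
    destruct (step_slow_origin _ _ _ _ _ Hs Ha); [right; eauto | eapply moved_in_memory; eauto].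
Qed.

Definition wf_state (st : state) : Prop :=
  (forall d v, fast st d = Some v -> d < M /\ classical n v) /\
  (forall a v, slow st a = Some v -> classical n v).

Lemma step_wf st i st' : wf_state st -> step n M st i st' -> wf_state st'.
Proof.
  intros [HF HS] Hs; inversion Hs; subst; split; simpl in *; auto.
  - intros d v Hv; apply load_spec in Hv as [Hv|[Hd [k [_ Hk]]]]; eauto.
  - intros b v Hv; apply store_spec in Hv as [Hv|[d [_ Hd]]]; [eauto | eapply HF; eauto].
  - intros d' v Hv; unfold upd in Hv; destruct (Nat.eqb_spec d' d); [|auto].
    subst; injection Hv as <-; auto.
  - intros d' v Hv; unfold upd in Hv; destruct (Nat.eqb_spec d' d); [|auto].
    subst; injection Hv as <-; auto.
Qed.

Lemma step_words_le st i st' : step n M st i st' -> words i <= M * is_msg i.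
Proof. intros Hs; inversion Hs; subst; simpl; lia. Qed.

Lemma exec_bandwidth_le_latency st p st' : exec n M st p st' -> bandwidth p <= M * latency p.
Proof.
  intros H; induction H as [|st1 st2 st3 i p Hs _ IH]; simpl; [lia|].
  apply step_words_le in Hs; lia.
Qed.

End Step.

(** * Tracing values through an execution *)

Definition instr_at (prog : list instr) (t : nat) : instr := nth t prog (OpSqrt 0 0).

Definition run (n M : nat) (prog : list instr) (sts : nat -> state) : Prop :=
  forall t, t < length prog -> step n M (sts t) (instr_at prog t) (sts (S t)).

Lemma exec_run n M st p st' : exec n M st p st' ->
  exists sts, sts 0 = st /\ sts (length p) = st' /\ run n M p sts.
Proof.
  intros H; induction H as [st|st1 st2 st3 i p Hs _ [sts [E0 [E1 HR]]]].
  - exists (fun _ => st); repeat split; intros t Ht; simpl in Ht; lia.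
  - exists (fun t => match t with 0 => st1 | S t => sts t end); repeat split; auto.
    intros [|t] Ht; simpl in *; [subst; auto | apply HR; lia].
Qed.

Lemma run_wf n M prog sts s0 : run n M prog sts -> sts 0 = init_state s0 ->
  matrix_layout n s0 -> forall t, t <= length prog -> wf_state n M (sts t).
Proof.
  intros HR H0 Hml t; induction t as [|t IH]; intros Ht.
  - rewrite H0; split; simpl; [discriminate|].
    intros a v Hv; destruct (Hml a v Hv) as [i [j [Hji [Hi ->]]]].
    right; exists i, j, true, (fun _ => false), true; constructor; auto.
  - eapply step_wf; [apply IH; lia | apply HR; lia].
Qed.

Definition fast_contents (M : nat) (st : state) : list expr :=
  flat_map (fun d => opt_list (fast st d)) (seq 0 M).

Lemma fast_contents_length M st : length (fast_contents M st) <= M.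
Proof. unfold fast_contents; rewrite <- (length_seq M 0) at 2; apply length_flat_map_opt. Qed.

Lemma last_change (Q : nat -> Prop) L : ~ Q 0 -> Q L ->
  exists tau, tau < L /\ ~ Q tau /\ forall t, tau < t <= L -> Q t.
Proof.
  induction L as [|L IH]; intros H0 HL; [contradiction|].
  destruct (classic (Q L)) as [H|H].
  - destruct (IH H0 H) as [tau [H1 [H2 H3]]]; exists tau; repeat split; auto.
    intros t Ht; destruct (Nat.eq_dec t (S L)); [subst; auto | apply H3; lia].
  - exists L; repeat split; auto; intros t Ht; replace t with (S L) by lia; auto.
Qed.

Lemma first_change (Q : nat -> Prop) s e : s <= e -> ~ Q s -> Q e ->
  exists t, s <= t < e /\ ~ Q t /\ Q (S t).
Proof.
  intros Hse; induction Hse as [|e Hse IH]; intros Hs He; [contradiction|].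
  destruct (classic (Q e)) as [H|H].
  - destruct (IH Hs H) as [t [Ht HQ]]; exists t; split; [lia | auto].
  - exists e; repeat split; auto; lia.
Qed.

Section Run.
Variables (n M : nat) (prog : list instr) (sts : nat -> state).
Hypothesis Hrun : run n M prog sts.
Hypothesis Hwf : forall t, t <= length prog -> wf_state n M (sts t).

Lemma fast_in_contents t d v : t <= length prog -> fast (sts t) d = Some v ->
  In v (fast_contents M (sts t)).
Proof.
  intros Ht Hv; apply in_flat_map_opt; exists d; split; auto.
  apply in_seq; destruct (proj1 (Hwf t Ht) d v Hv); lia.
Qed.

Definition moved_between (s e : nat) : list expr :=
  flat_map (fun t => moved (sts t) (instr_at prog t)) (seq s (e - s)).

Lemma in_moved_between s e v :
  In v (moved_between s e) <-> exists t, s <= t < e /\ In v (moved (sts t) (instr_at prog t)).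
Proof.
  unfold moved_between; rewrite in_flat_map.
  split; intros [t [Ht Hv]]; exists t; rewrite in_seq in *; split; auto; lia.
Qed.

Lemma moved_between_mono s e s' e' v : s' <= s -> e <= e' ->
  In v (moved_between s e) -> In v (moved_between s' e').
Proof. rewrite !in_moved_between; intros Hs He [t [Ht Hv]]; exists t; split; auto; lia. Qed.

Lemma slow_origin s t a V : s <= t <= length prog -> slow (sts t) a = Some V ->
  slow (sts s) a = Some V \/ In V (moved_between s t).
Proof.
  intros [Hst HtL]; induction Hst as [|t Hst IH]; intros HV; auto.
  destruct (step_slow_origin _ _ _ _ _ _ _ (Hrun t ltac:(lia)) HV) as [H|H].
  - destruct (IH ltac:(lia) H) as [H'|H']; auto.
    right; eapply moved_between_mono; [| |exact H']; lia.
  - right; apply in_moved_between; exists t; split; auto; lia.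
Qed.

(* A computed value owning its entry has an operand of the same entry owning
   it (by [classical_child]); following these operands back leads to a value
   present at the start or moved in between. *)
Lemma fast_owner_origin s t d x : s <= t <= length prog -> fast (sts t) d = Some x ->
  owns_entry x ->
  exists v, entry_of v = entry_of x /\
    (In v (fast_contents M (sts s)) \/ In v (moved_between s t)).
Proof.
  intros [Hst HtL]; revert d x; induction Hst as [|t Hst IH]; intros d x Hx Hown.
  - exists x; split; [reflexivity | left; eauto using fast_in_contents].
  - assert (Hmono : forall v, In v (moved_between s t) -> In v (moved_between s (S t)))
      by (intros v; apply moved_between_mono; lia).
    destruct (step_fast_origin _ _ _ _ _ _ _ (Hrun t ltac:(lia)) Hx)
      as [[d' H]|[H|[Hr Hc]]].
    + destruct (IH ltac:(lia) d' x H Hown) as [v [Hv [Hv'|Hv']]]; eauto.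
    + exists x; split; [reflexivity | right; apply in_moved_between; exists t; split; auto; lia].
    + assert (Hcl : classical n x) by exact (proj2 (proj1 (Hwf (S t) HtL) d x Hx)).
      destruct (subterm_inv _ _ Hown) as [E|[c [Hcx Hsc]]];
        [exfalso; eapply result_not_Ent; eauto|].
      destruct (classical_child _ _ _ Hcl Hcx) as [_ [E|[_ Hn]]]; [|contradiction].
      destruct (Hc c Hcx) as [dc Hdc].
      assert (Hownc : owns_entry c) by (unfold owns_entry; rewrite E; exact Hsc).
      destruct (IH ltac:(lia) dc c Hdc Hownc) as [v [Hv [Hv'|Hv']]];
        exists v; (split; [congruence|]); auto.
Qed.

Definition window_entries (s e : nat) : list (nat * nat) :=
  map entry_of (fast_contents M (sts s) ++ moved_between s e ++ fast_contents M (sts e)).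

Lemma fast_owner_in_window s t e d x : s <= t <= e -> e <= length prog ->
  fast (sts t) d = Some x -> owns_entry x -> In (entry_of x) (window_entries s e).
Proof.
  intros Ht He Hx Hown.
  destruct (fast_owner_origin s t d x ltac:(lia) Hx Hown) as [v [<- Hv]].
  apply in_map; rewrite !in_app_iff.
  destruct Hv as [Hv|Hv]; auto; right; left; eapply moved_between_mono; [| |exact Hv]; lia.
Qed.

Lemma newly_alive_operand_in_window s t e r c : s <= t < e -> e <= length prog ->
  ~ alive r (sts t) -> alive r (sts (S t)) -> child c r -> owns_entry c ->
  In (entry_of c) (window_entries s e).
Proof.
  intros Ht He Hna Hal Hc Hown.
  destruct (step_newly_alive _ _ _ _ _ _ (Hrun t ltac:(lia)) Hal Hna) as [_ Hops].
  destruct (Hops c Hc) as [d Hd].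
  eapply fast_owner_in_window; eauto; lia.
Qed.

(* The product survives until [e] inside a value of its own entry, or inside
   an L-value of that entry, whose computation involved an operand of the entry. *)
Lemma surviving_product_in_window s tau e x y : s <= tau < e -> e <= length prog ->
  ~ alive (EMul x y) (sts tau) -> alive (EMul x y) (sts e) ->
  In (entry_of (EMul x y)) (window_entries s e).
Proof.
  intros Htau He Hna [V [HV HsV]].
  assert (HVcl : classical n V).
  { destruct (Hwf e He) as [HF HS]; destruct HV as [[d Hd]|[a Ha]]; [eapply HF|eapply HS]; eauto. }
  destruct (classical_above_product n x y V HsV HVcl) as [E|(N & HPN & HNV & HN)].
  - rewrite <- E; apply in_map; rewrite !in_app_iff.
    destruct HV as [[d Hd]|[a Ha]]; [right; right; eauto using fast_in_contents|].
    destruct (slow_origin tau e a V ltac:(lia) Ha) as [H|H].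
    + exfalso; apply Hna; exists V; split; [right; eauto | auto].
    + right; left; eapply moved_between_mono; [| |exact H]; lia.
  - destruct (first_change (fun t => alive N (sts t)) tau e) as [t [Ht [HNt HNt']]].
    + lia.
    + intros [v [Hv Hsv]]; apply Hna; exists v; split; eauto using subterm_trans.
    + exists V; split; auto.
    + destruct (Lterm_operand _ _ _ _ HN) as [c [Hc [Hown Ec]]].
      rewrite (surjective_pairing (entry_of (EMul x y))), <- Ec.
      apply (newly_alive_operand_in_window s t e N c); auto; lia.
Qed.

End Run.

Fixpoint sum_over {A} (l : list A) (f : A -> nat) : nat :=
  match l with [] => 0 | x :: l => f x + sum_over l f end.

Lemma sum_over_app {A} (l l' : list A) f : sum_over (l ++ l') f = sum_over l f + sum_over l' f.
Proof. induction l; simpl; lia. Qed.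

Lemma sum_over_le {A} (l : list A) f g :
  (forall x, In x l -> f x <= g x) -> sum_over l f <= sum_over l g.
Proof.
  induction l as [|a l IH]; simpl; intros H; auto.
  pose proof (H a (or_introl eq_refl)); pose proof (IH (fun x Hx => H x (or_intror Hx))); lia.
Qed.

Lemma sum_over_add {A} (l : list A) f g :
  sum_over l (fun x => f x + g x) = sum_over l f + sum_over l g.
Proof. induction l; simpl; lia. Qed.

Lemma sum_over_mul_l {A} (l : list A) c f : sum_over l (fun x => c * f x) = c * sum_over l f.
Proof. induction l; simpl; lia. Qed.

Lemma sum_over_const {A} (l : list A) c : sum_over l (fun _ => c) = length l * c.
Proof. induction l; simpl; lia. Qed.

Lemma sum_over_lower {A} (l : list A) f c :
  (forall x, In x l -> c <= f x) -> length l * c <= sum_over l f.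
Proof. intros H; rewrite <- sum_over_const; apply sum_over_le; auto. Qed.

Lemma sum_over_upper {A} (l : list A) f c :
  (forall x, In x l -> f x <= c) -> sum_over l f <= length l * c.
Proof. intros H; rewrite <- sum_over_const; apply sum_over_le; auto. Qed.

Lemma sum_over_ext {A} (l : list A) f g :
  (forall x, In x l -> f x = g x) -> sum_over l f = sum_over l g.
Proof. induction l as [|a l IH]; simpl; intros H; [reflexivity|]. rewrite H, IH; auto. Qed.

Lemma sum_over_seq_lower a f c : (forall x, x < a -> c <= f x) -> a * c <= sum_over (seq 0 a) f.
Proof.
  intros H; rewrite <- (length_seq a 0) at 1; apply sum_over_lower.
  intros x Hx; apply in_seq in Hx; apply H; lia.
Qed.

Lemma sum_over_term {A} (l : list A) f x : In x l -> f x <= sum_over l f.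
Proof.
  induction l as [|a l IH]; simpl; [tauto|]; intros [->|H]; [lia | specialize (IH H); lia].
Qed.

Lemma sum_over_swap {A B} (l : list A) (l' : list B) F :
  sum_over l (fun x => sum_over l' (F x)) = sum_over l' (fun y => sum_over l (fun x => F x y)).
Proof.
  induction l as [|a l IH]; simpl.
  - induction l'; simpl; auto.
  - rewrite IH, <- sum_over_add; reflexivity.
Qed.

Lemma sum_over_map {A B} (l : list A) (g : A -> B) f :
  sum_over (map g l) f = sum_over l (fun x => f (g x)).
Proof. induction l; simpl; auto. Qed.

Lemma sum_over_list_prod {A B} (l : list A) (l' : list B) F :
  sum_over l (fun x => sum_over l' (F x)) = sum_over (list_prod l l') (fun p => F (fst p) (snd p)).
Proof. induction l; simpl; auto. rewrite sum_over_app, sum_over_map, IHl; reflexivity. Qed.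

Definition pair_eq_dec (p q : nat * nat) : {p = q} + {p <> q}.
Proof. decide equality; apply Nat.eq_dec. Defined.

Definition indicator (P : list (nat * nat)) (p : nat * nat) : nat :=
  if in_dec pair_eq_dec p P then 1 else 0.

Lemma indicator_In P p : In p P -> indicator P p = 1.
Proof. unfold indicator; destruct in_dec; tauto. Qed.

Lemma sum_indicator_NoDup (l P : list (nat * nat)) :
  NoDup l -> sum_over l (indicator P) <= length P.
Proof.
  intros Hl; transitivity (length (filter (fun p => if in_dec pair_eq_dec p P then true else false) l)).
  - clear Hl; induction l as [|p l IH]; simpl; auto.
    unfold indicator at 1; destruct in_dec; simpl; lia.
  - apply NoDup_incl_length; [apply NoDup_filter; auto|].
    intros p Hp; apply filter_In in Hp as [_ Hp]; destruct in_dec; [auto | discriminate].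
Qed.

Lemma NoDup_map_inj_in {A B} (h : A -> B) l : NoDup l ->
  (forall x y, In x l -> In y l -> h x = h y -> x = y) -> NoDup (map h l).
Proof.
  induction 1 as [|x l Hx Hl IH]; simpl; intros Hi; constructor.
  - intros (y & Hy & Hyl)%in_map_iff.
    assert (y = x) as -> by (apply Hi; simpl; auto). contradiction.
  - apply IH; intros; apply Hi; simpl; auto.
Qed.

Lemma NoDup_list_prod {A B} (l : list A) (l' : list B) :
  NoDup l -> NoDup l' -> NoDup (list_prod l l').
Proof.
  intros Hl Hl'; induction Hl as [|x l Hx Hl IH]; simpl; [constructor|].
  apply NoDup_app; auto.
  - apply NoDup_map_inj_in; auto. intros y z _ _ E; injection E; auto.
  - intros p (y & <- & _)%in_map_iff (Hxl & _)%in_prod_iff; contradiction.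
Qed.

Lemma sum_indicator_injective (h : nat -> nat -> nat * nat) a b P :
  (forall x y x' y', x < a -> y < b -> x' < a -> y' < b -> h x y = h x' y' -> x = x' /\ y = y') ->
  sum_over (seq 0 a) (fun x => sum_over (seq 0 b) (fun y => indicator P (h x y))) <= length P.
Proof.
  intros Hinj; rewrite sum_over_list_prod.
  rewrite <- (sum_over_map (list_prod (seq 0 a) (seq 0 b)) (fun p => h (fst p) (snd p))).
  apply sum_indicator_NoDup, NoDup_map_inj_in; [apply NoDup_list_prod; apply seq_NoDup|].
  intros [x y] [x' y'] (Hx & Hy)%in_prod_iff (Hx' & Hy')%in_prod_iff E.
  rewrite in_seq in Hx, Hy, Hx', Hy'; destruct (Hinj x y x' y'); simpl in *; try lia; congruence.
Qed.

(* Discrete Loomis-Whitney: in slice k the triangles number at most d_k e_k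
   (the degrees of the slice) and at most N <= r^2, hence at most r (d_k + e_k). *)
Lemma triangle_count (P : list (nat * nat)) (u v : nat -> nat) a r :
  (forall x y, u x = u y -> x = y) -> (forall x y, v x = v y -> x = y) ->
  length P <= r * r ->
  sum_over (seq 0 a) (fun k => sum_over (seq 0 a) (fun j => sum_over (seq 0 a) (fun i =>
    indicator P (u i, k) * indicator P (v j, k) * indicator P (u i, v j))))
  <= 2 * r * length P.
Proof.
  intros Hu Hv Hr.
  set (d k := sum_over (seq 0 a) (fun i => indicator P (u i, k))).
  set (e k := sum_over (seq 0 a) (fun j => indicator P (v j, k))).
  assert (Hd : sum_over (seq 0 a) d <= length P).
  { apply (sum_indicator_injective (fun k i => (u i, k))).
    intros x y x' y' _ _ _ _ E; injection E; auto. }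
  assert (He : sum_over (seq 0 a) e <= length P).
  { apply (sum_indicator_injective (fun k j => (v j, k))).
    intros x y x' y' _ _ _ _ E; injection E; auto. }
  transitivity (sum_over (seq 0 a) (fun k => r * (d k + e k))).
  2: { rewrite sum_over_mul_l, sum_over_add; nia. }
  apply sum_over_le; intros k _.
  set (c := sum_over (seq 0 a) _).
  assert (Hde : c <= d k * e k).
  { unfold d, e; rewrite <- sum_over_mul_l; apply sum_over_le; intros j _.
    rewrite Nat.mul_comm, <- sum_over_mul_l; apply sum_over_le; intros i _.
    unfold indicator; repeat destruct in_dec; simpl; lia. }
  assert (HN : c <= length P).
  { transitivity (sum_over (seq 0 a) (fun j => sum_over (seq 0 a) (fun i => indicator P (u i, v j)))).
    - apply sum_over_le; intros j _; apply sum_over_le; intros i _.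
      unfold indicator; repeat destruct in_dec; simpl; lia.
    - apply (sum_indicator_injective (fun j i => (u i, v j))).
      intros x y x' y' _ _ _ _ E; injection E; auto. }
  destruct (Nat.le_gt_cases (d k) r); nia.
Qed.

(** * Segments of M words *)

Definition words_before (prog : list instr) (t : nat) : nat :=
  sum_over (seq 0 t) (fun u => words (instr_at prog u)).

Lemma words_before_add prog s m :
  words_before prog (s + m) =
  words_before prog s + sum_over (seq s m) (fun u => words (instr_at prog u)).
Proof. unfold words_before; rewrite seq_app, sum_over_app; reflexivity. Qed.

Lemma words_before_mono prog t t' : t <= t' -> words_before prog t <= words_before prog t'.
Proof. intros H; replace t' with (t + (t' - t)) by lia; rewrite words_before_add; lia. Qed.

Lemma bandwidth_words_before p : bandwidth p = words_before p (length p).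
Proof.
  unfold words_before; induction p as [|i p IH]; simpl; auto.
  rewrite <- seq_shift, sum_over_map; simpl; rewrite IH; reflexivity.
Qed.

Lemma length_flat_map_le {A B} (g : A -> list B) w l :
  (forall x, length (g x) <= w x) -> length (flat_map g l) <= sum_over l w.
Proof. intros H; induction l as [|a l IH]; simpl; auto. rewrite length_app; specialize (H a); lia. Qed.

Lemma length_moved_between prog sts s e :
  length (moved_between prog sts s e) <= words_before prog e - words_before prog s.
Proof.
  destruct (Nat.le_gt_cases s e) as [Hse|Hse];
    [|unfold moved_between; replace (e - s) with 0 by lia; simpl; lia].
  replace e with (s + (e - s)) at 2 by lia; rewrite words_before_add.
  enough (length (moved_between prog sts s e) <=
          sum_over (seq s (e - s)) (fun u => words (instr_at prog u))) by lia.
  apply length_flat_map_le; intros; apply moved_length.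
Qed.

Lemma filter_downward_closed (p : nat -> bool) m t :
  (forall t t', t <= t' -> p t' = true -> p t = true) -> t < m ->
  p t = true <-> t < length (filter p (seq 0 m)).
Proof.
  intros Hp; revert t; induction m as [|m IH]; intros t Ht; [lia|].
  rewrite seq_S, filter_app, length_app; simpl.
  assert (Hc : length (filter p (seq 0 m)) <= m)
    by (rewrite <- (length_seq m 0) at 2; apply filter_length_le).
  destruct (p m) eqn:Epm; simpl.
  - assert (Hcm : length (filter p (seq 0 m)) = m).
    { destruct m as [|m']; [lia|].
      assert (Hm' : p m' = true) by (apply Hp with (S m'); auto).
      apply IH in Hm'; lia. }
    rewrite Hcm; split; intros; [lia | apply Hp with m; auto; lia].
  - destruct (Nat.eq_dec t m) as [->|Htm]; [rewrite Epm; split; [discriminate | lia]|].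
    rewrite Nat.add_0_r; apply IH; lia.
Qed.

(* The q-th segment starts at the first time at which q M words have been moved. *)
Definition seg_start (M : nat) (prog : list instr) (q : nat) : nat :=
  length (filter (fun t => words_before prog t <? q * M) (seq 0 (S (length prog)))).

Lemma seg_start_spec M prog q t : t <= length prog ->
  t < seg_start M prog q <-> words_before prog t < q * M.
Proof.
  intros Ht; unfold seg_start; rewrite <- filter_downward_closed, Nat.ltb_lt; [reflexivity| |lia].
  intros a b Hab; rewrite !Nat.ltb_lt; pose proof (words_before_mono prog a b Hab); lia.
Qed.

Section Segments.
Variables (n M : nat) (s0 : nat -> option expr) (prog : list instr) (sts : nat -> state).
Hypothesis HM : 0 < M.
Hypothesis Hrun : run n M prog sts.
Hypothesis Hinit : sts 0 = init_state s0.
Hypothesis Hlayout : matrix_layout n s0.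
Hypothesis Hdone : computes_cholesky n (sts (length prog)).

Let Hwf := run_wf n M prog sts s0 Hrun Hinit Hlayout.

Definition segment_entries (q : nat) : list (nat * nat) :=
  window_entries M prog sts (min (seg_start M prog q) (length prog))
                            (min (seg_start M prog (S q)) (length prog)).

Lemma words_at_le t : t < length prog -> words (instr_at prog t) <= M.
Proof.
  intros Ht; pose proof (step_words_le _ _ _ _ _ (Hrun t Ht)).
  destruct (instr_at prog t); simpl in *; lia.
Qed.

Lemma segment_entries_length q : length (segment_entries q) <= 4 * M.
Proof.
  set (s := min (seg_start M prog q) (length prog)).
  set (e := min (seg_start M prog (S q)) (length prog)).
  unfold segment_entries, window_entries; fold s e; rewrite length_map, !length_app.
  pose proof (fast_contents_length M (sts s)); pose proof (fast_contents_length M (sts e)).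
  pose proof (length_moved_between prog sts s e).
  enough (words_before prog e - words_before prog s <= 2 * M) by lia.
  destruct (Nat.le_gt_cases e s) as [Hes|Hse].
  - pose proof (words_before_mono prog e s Hes); lia.
  - assert (Hs : q * M <= words_before prog s).
    { destruct (Nat.lt_ge_cases (words_before prog s) (q * M)) as [Hlt|Hge]; auto.
      apply seg_start_spec in Hlt; unfold s, e in *; lia. }
    assert (He : words_before prog (e - 1) < S q * M)
      by (apply seg_start_spec; unfold e in *; lia).
    assert (Hstep : words_before prog e <= words_before prog (e - 1) + M).
    { replace e with (e - 1 + 1) at 1 by lia; rewrite words_before_add; simpl.
      pose proof (words_at_le (e - 1) ltac:(unfold e in *; lia)); lia. }
    lia.
Qed.

Lemma time_in_segment tau : tau < length prog ->
  min (seg_start M prog (words_before prog tau / M)) (length prog) <= tau <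
  min (seg_start M prog (S (words_before prog tau / M))) (length prog).
Proof.
  intros Htau; set (q := words_before prog tau / M).
  assert (Hq1 : q * M <= words_before prog tau)
    by (unfold q; rewrite Nat.mul_comm; apply Nat.Div0.mul_div_le).
  assert (Hq2 : words_before prog tau < S q * M)
    by (unfold q; rewrite Nat.mul_comm; apply Nat.mul_succ_div_gt; lia).
  split.
  - destruct (Nat.lt_ge_cases tau (seg_start M prog q)) as [H|H]; [|lia].
    apply seg_start_spec in H; lia.
  - apply Nat.min_glb_lt; [apply seg_start_spec|]; lia.
Qed.

Lemma product_not_alive_initially x y : ~ alive (EMul x y) (sts 0).
Proof.
  rewrite Hinit; intros [v [[[d Hd]|[a Ha]] Hs]]; [discriminate|].
  destruct (Hlayout a v Ha) as [i [j [_ [_ ->]]]]; apply subterm_Ent in Hs; discriminate.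
Qed.

(* Each product L(i,k) L(j,k) of the output is charged to the segment
   in which it is computed for the last time. *)
Lemma product_charged i j k : k < j -> j < i -> i < n ->
  exists q, q <= bandwidth prog / M /\
    In (i, k) (segment_entries q) /\ In (j, k) (segment_entries q) /\ In (i, j) (segment_entries q).
Proof.
  intros Hkj Hji Hin.
  destruct (Hdone i j ltac:(lia) Hin) as (addr & Lij & Haddr & HL).
  inversion HL as [| ? ? S e d _ _ HP HS _]; subst; [lia|].
  destruct (Psum_product _ _ _ _ _ _ _ k HP) as (x & y & Hxy & Hx & Hy);
    [rewrite HS; apply Nat.ltb_lt; auto|].
  assert (Hend : alive (EMul x y) (sts (length prog))).
  { exists (EDiv e d); split; [right; eauto|].
    eapply subterm_trans; [exact Hxy | apply subterm_of_child; constructor]. }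
  destruct (last_change (fun t => alive (EMul x y) (sts t)) (length prog)
              (product_not_alive_initially x y) Hend) as [tau [Htau [Hna Hal]]].
  set (q := words_before prog tau / M).
  exists q; split.
  - apply Nat.Div0.div_le_mono; rewrite bandwidth_words_before; apply words_before_mono; lia.
  - destruct (time_in_segment tau Htau) as [Hs He]; fold q in Hs, He.
    assert (Hop : forall c, child c (EMul x y) -> owns_entry c ->
                            In (entry_of c) (segment_entries q)).
    { intros c Hc Hown.
      apply (newly_alive_operand_in_window n M prog sts Hrun Hwf _ tau _ (EMul x y)); auto; lia. }
    rewrite <- (entry_of_Lterm _ _ _ _ Hx) at 1; rewrite <- (entry_of_Lterm _ _ _ _ Hy) at 1.
    split; [|split]; try (apply Hop; [constructor | eapply Lterm_owns_entry; eauto]).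
    replace (i, j) with (entry_of (EMul x y))
      by (simpl; rewrite (entry_of_Lterm _ _ _ _ Hx), (entry_of_Lterm _ _ _ _ Hy); reflexivity).
    unfold segment_entries; apply (surviving_product_in_window n M prog sts Hrun Hwf _ tau);
      [lia | lia | exact Hna | apply Hal; lia].
Qed.

(* Taking k, j, i in the lower, middle and upper third yields (n/3)^3 triples k < j < i. *)
Lemma charged_triples_bound :
  (n / 3) * (n / 3) * (n / 3) <= S (bandwidth prog / M) * (16 * M * (Nat.sqrt M + 1)).
Proof.
  set (a := n / 3); set (Q := S (bandwidth prog / M)).
  assert (Ha : 3 * a <= n) by apply Nat.Div0.mul_div_le.
  set (F q k j i := indicator (segment_entries q) (i + 2 * a, k) *
                    indicator (segment_entries q) (j + a, k) *
                    indicator (segment_entries q) (i + 2 * a, j + a)).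
  transitivity (sum_over (seq 0 a) (fun k => sum_over (seq 0 a) (fun j =>
                  sum_over (seq 0 a) (fun i => sum_over (seq 0 Q) (fun q => F q k j i))))).
  { replace (a * a * a) with (a * (a * (a * 1))) by lia.
    apply sum_over_seq_lower; intros k Hk; apply sum_over_seq_lower; intros j Hj;
      apply sum_over_seq_lower; intros i Hi.
    destruct (product_charged (i + 2 * a) (j + a) k) as (q & Hq & H1 & H2 & H3); try lia.
    transitivity (F q k j i); [unfold F; rewrite !indicator_In; auto|].
    apply (sum_over_term (seq 0 Q) (fun q => F q k j i)); apply in_seq; lia. }
  replace (sum_over (seq 0 a) _) with (sum_over (seq 0 Q) (fun q => sum_over (seq 0 a) (fun k =>
             sum_over (seq 0 a) (fun j => sum_over (seq 0 a) (fun i => F q k j i))))).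
  2: { rewrite sum_over_swap; apply sum_over_ext; intros k _.
       rewrite sum_over_swap; apply sum_over_ext; intros j _.
       apply sum_over_swap. }
  rewrite <- (length_seq Q 0) at 2; apply sum_over_upper; intros q _.
  pose proof (Nat.sqrt_spec' M); pose proof (segment_entries_length q).
  transitivity (2 * (2 * (Nat.sqrt M + 1)) * length (segment_entries q)); [|nia].
  apply triangle_count; intros; lia.
Qed.

(* Every L(i,j) ends up in slow memory, and none is there initially. *)
Lemma output_bound : (n / 2) * (n / 2) <= bandwidth prog.
Proof.
  set (h := n / 2); set (E := map entry_of (moved_between prog sts 0 (length prog))).
  assert (Hh : 2 * h <= n) by apply Nat.Div0.mul_div_le.
  transitivity (length E).
  - transitivity (sum_over (seq 0 h) (fun x => sum_over (seq 0 h) (fun y => indicator E (x + h, y)))).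
    + replace (h * h) with (h * (h * 1)) by lia.
      apply sum_over_seq_lower; intros x Hx; apply sum_over_seq_lower; intros y Hy.
      rewrite indicator_In; auto.
      destruct (Hdone (x + h) y ltac:(lia) ltac:(lia)) as (addr & V & HV & HL).
      destruct (slow_origin n M prog sts Hrun 0 (length prog) addr V ltac:(lia) HV) as [H|H].
      * rewrite Hinit in H; destruct (Hlayout addr V H) as (i & j & _ & _ & ->).
        exfalso; eapply Lterm_not_Ent; eauto.
      * rewrite <- (entry_of_Lterm _ _ _ _ HL); apply in_map; exact H.
    + apply (sum_indicator_injective (fun x y => (x + h, y))).
      intros x y x' y' _ _ _ _ E'; injection E'; lia.
  - unfold E; rewrite length_map, bandwidth_words_before.
    pose proof (length_moved_between prog sts 0 (length prog)); lia.
Qed.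

End Segments.

Lemma segment_budget_le W M s : 1 <= s ->
  S (W / M) * (16 * M * (s + 1)) <= 32 * ((W + M) * s).
Proof.
  intros Hs.
  replace (S (W / M) * (16 * M * (s + 1))) with (16 * ((S (W / M) * M) * (s + 1))) by ring.
  assert (S (W / M) * M <= W + M) by (pose proof (Nat.Div0.mul_div_le W M); simpl; lia).
  assert ((S (W / M) * M) * (s + 1) <= (W + M) * (2 * s)) by (apply Nat.mul_le_mono; lia).
  lia.
Qed.

(* Cases: n <= 8 (the output bound alone), W >= M (the triangle count), and
   W < M, where the triangle count forces n = O(sqrt M). *)
Lemma cube_le_bandwidth_sqrt n M W : 0 < M -> M < n * n ->
  (n / 3) * (n / 3) * (n / 3) <= S (W / M) * (16 * M * (Nat.sqrt M + 1)) ->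
  (n / 2) * (n / 2) <= W ->
  n * n * n <= 4000 * (W * Nat.sqrt M).
Proof.
  intros HM HMn Hcube Hsq.
  set (a := n / 3) in *; set (h := n / 2) in *; set (s := Nat.sqrt M) in *.
  assert (Ha : n <= 3 * a + 2)
    by (pose proof (Nat.div_mod n 3); pose proof (Nat.mod_upper_bound n 3); lia).
  assert (Hh : n <= 2 * h + 1)
    by (pose proof (Nat.div_mod n 2); pose proof (Nat.mod_upper_bound n 2); lia).
  destruct (Nat.sqrt_spec' M) as [Hs1 Hs2]; fold s in Hs1, Hs2.
  assert (Hs : 1 <= s) by (apply Nat.sqrt_le_square; lia).
  assert (Hn : 2 <= n).
  { destruct (Nat.le_gt_cases 2 n) as [H|H]; [exact H|].
    assert (n * n <= 1 * 1) by (apply Nat.mul_le_mono; lia); lia. }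
  assert (Hn2 : n * n <= 9 * W).
  { assert (n * n <= (3 * h) * (3 * h)) by (apply Nat.mul_le_mono; lia); lia. }
  pose proof (segment_budget_le W M s Hs) as Hbudget.
  destruct (Nat.le_gt_cases n 8) as [Hsmall|Hbig].
  - assert (n * n * n <= (9 * W) * 8) by (apply Nat.mul_le_mono; lia).
    assert (W <= W * s) by (rewrite <- (Nat.mul_1_r W) at 1; apply Nat.mul_le_mono; lia).
    lia.
  - destruct (Nat.le_gt_cases M W) as [HMW|HWM].
    + assert ((W + M) * s <= 2 * (W * s)) by (rewrite Nat.mul_assoc; apply Nat.mul_le_mono; lia).
      assert (3 * n * (3 * n) * (3 * n) <= 11 * a * (11 * a) * (11 * a))
        by (apply Nat.mul_le_mono; [apply Nat.mul_le_mono|]; lia).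
      replace (3 * n * (3 * n) * (3 * n)) with (27 * (n * n * n)) in * by ring.
      replace (11 * a * (11 * a) * (11 * a)) with (1331 * (a * a * a)) in * by ring.
      lia.
    + assert (M <= 4 * (s * s))
        by (assert (S s * S s <= 2 * s * (2 * s)) by (apply Nat.mul_le_mono; lia); lia).
      assert ((W + M) * s <= 8 * (s * s * s))
        by (replace (8 * (s * s * s)) with ((2 * (4 * (s * s))) * s) by ring;
            apply Nat.mul_le_mono; lia).
      assert (Ha7 : a <= 7 * s).
      { apply (Nat.pow_le_mono_l_iff a (7 * s) 3); [discriminate|].
        change (a * (a * (a * 1)) <= 7 * s * (7 * s * (7 * s * 1))).
        replace (7 * s * (7 * s * (7 * s * 1))) with (343 * (s * s * s)) by ring.
        replace (a * (a * (a * 1))) with (a * a * a) by ring; lia. }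
      assert (n * (n * n) <= (23 * s) * (9 * W)) by (apply Nat.mul_le_mono; lia).
      replace (23 * s * (9 * W)) with (207 * (W * s)) in * by ring.
      rewrite Nat.mul_assoc in *; lia.
Qed.

Lemma INR_sqrt_le M : (INR (Nat.sqrt M) <= sqrt (INR M))%R.
Proof.
  rewrite <- (sqrt_square (INR (Nat.sqrt M))) by apply pos_INR.
  apply sqrt_le_1_alt; rewrite <- mult_INR; apply le_INR, Nat.sqrt_spec'.
Qed.

Lemma real_lower_bounds n M W Lat : 0 < M ->
  n * n * n <= 4000 * (W * Nat.sqrt M) -> W <= M * Lat ->
  (INR W >= 1 / 4000 * INR n ^ 3 / sqrt (INR M))%R /\
  (INR Lat >= 1 / 4000 * INR n ^ 3 / (INR M * sqrt (INR M)))%R.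
Proof.
  intros HM Hcube HWL.
  set (m := sqrt (INR M)).
  assert (HMr : (0 < INR M)%R) by (apply lt_0_INR; exact HM).
  assert (Hm : (0 < m)%R) by (apply sqrt_lt_R0; exact HMr).
  assert (Hkey : (INR n ^ 3 <= 4000 * (INR W * m))%R).
  { apply le_INR in Hcube; rewrite !mult_INR, (INR_IZR_INZ 4000) in Hcube.
    change (Z.of_nat 4000) with 4000%Z in Hcube.
    assert (INR W * INR (Nat.sqrt M) <= INR W * m)%R
      by (apply Rmult_le_compat_l; [apply pos_INR | apply INR_sqrt_le]).
    simpl; lra. }
  apply le_INR in HWL; rewrite mult_INR in HWL.
  assert (HWm : (INR W * m <= INR M * m * INR Lat)%R) by nra.
  split; apply Rle_ge.
  - apply Rmult_le_reg_r with m; [exact Hm|].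
    unfold Rdiv; rewrite Rmult_assoc, Rinv_l by lra; lra.
  - apply Rmult_le_reg_r with (INR M * m)%R; [nra|].
    unfold Rdiv; rewrite Rmult_assoc, Rinv_l by nra; lra.
Qed.

Theorem corollary2p5 :
  exists c : R, (c > 0)%R /\
    forall (n M : nat) (s0 : nat -> option expr) (prog : list instr) (fin : state),
      0 < M -> M < n * n ->
      matrix_layout n s0 ->
      exec n M (init_state s0) prog fin ->
      computes_cholesky n fin ->
      (INR (bandwidth prog) >= c * INR n ^ 3 / sqrt (INR M))%R /\
      (INR (latency prog) >= c * INR n ^ 3 / (INR M * sqrt (INR M)))%R.
Proof.
  exists (1 / 4000)%R; split; [lra|].
  intros n M s0 prog fin HM HMn Hlayout Hexec Hdone.
  destruct (exec_run _ _ _ _ _ Hexec) as (sts & Hinit & Hfin & Hrun); subst fin.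
  apply real_lower_bounds; [exact HM | | exact (exec_bandwidth_le_latency _ _ _ _ _ Hexec)].
  apply cube_le_bandwidth_sqrt; [exact HM | exact HMn | |].
  - eapply charged_triples_bound; eauto.
  - eapply output_bound; eauto.
Qed.
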